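(* Let $(M,\hat J,\hat\theta)$ be a pseudohermitian submanifold of $H_n$ of CR dimension $m$ with fundamental vector field $\nu$, and let $(e_1,\dots,e_{2n})$ be a Darboux frame over an open set $U\subset M$ with dual forms $\omega^1,\dots,\omega^{2n},\Theta$. Let $\hat e_j=e_j$, $\hat e_{m+j}=e_{n+j}$ ($1\le j\le m$), $\hat T=T+\nu$, and let $\{\hat\omega^1,\dots,\hat\omega^{2m},\hat\theta\}$ be the coframe on $U$ dual to $\{\hat e_1,\dots,\hat e_{2m},\hat T\}$. Then, for $1\le j\le m$ and $m+1\le a\le n$, $$\omega^j|_M=\hat\omega^j,\quad \omega^{n+j}|_M=\hat\omega^{m+j},\quad \omega^a|_M=\tfrac12\langle\nu,e_a\rangle\hat\theta,\quad \omega^{n+a}|_M=\tfrac12\langle\nu,e_{n+a}\rangle\hat\theta,$$ and hence, with $\theta^\beta=\omega^\beta+i\omega^{n+\beta}$, $\hat\theta^j=\hat\omega^j+i\hat\omega^{m+j}$ and $Z_a=\frac12(e_a-ie_{n+a})$, $$\theta^j|_M=\hat\theta^j,\qquad \theta^a|_M=\langle\nu,Z_a\rangle\hat\theta.$$ In particular, if $\nu=0$ then $\theta^a|_M=0$.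
   Context: $H_n$ is $\mathbb{R}^{2n+1}$ with coordinates $(x,y,t)$, $\Theta=dt+\sum_\beta(x_\beta dy_\beta-y_\beta dx_\beta)$, $\xi=\ker\Theta$ spanned by $\mathring e_\beta=\partial_{x_\beta}+y_\beta\partial_t$, $\mathring e_{n+\beta}=\partial_{y_\beta}-x_\beta\partial_t$; $J\mathring e_\beta=\mathring e_{n+\beta}$, $J\mathring e_{n+\beta}=-\mathring e_\beta$; $T=\partial_t$. The adapted metric makes $\mathring e_1,\dots,\mathring e_{2n},T$ orthonormal. The Levi metric on $\xi$ is $\langle X,Y\rangle=d\Theta(X,JY)$, extended to $\xi\otimes\mathbb C$ as a Hermitian form (complex-linear in the first slot, conjugate-linear in the second). A pseudohermitian submanifold of CR dimension $m$ is a $(2m+1)$-dimensional submanifold $M$ with $\hat\xi=TM\cap\xi$ of rank $2m$, $J$-invariant, and $(M,\hat J=J|_{\hat\xi},\hat\theta=\Theta|_M)$ pseudohermitian with $\ker\hat\theta=\hat\xi$. $\hat\xi^\perp$ is the orthogonal complement of $\hat\xi$ in $\xi|_M$; the fundamental vector field $\nu$ is the unique section of $\hat\xi^\perp$ with $T+\nu$ tangent to $M$. Indices: $1\le j\le m$, $m+1\le a\le n$, $1\le\beta\le n$. A Darboux frame over $U\subset M$ is a family of sections $e_1,\dots,e_{2n}$ of $\xi$ along $U$, orthonormal for the adapted metric, with $e_{n+\beta}=Je_\beta$, $e_j\in\hat\xi$, $e_a\in\hat\xi^\perp$; $\omega^1,\dots,\omega^{2n},\Theta$ denote the forms along $U$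 dual to $e_1,\dots,e_{2n},T$, and $\cdot|_M$ denotes pullback to $M$. *)

From HB Require Import structures.
From mathcomp Require Import all_boot all_order all_algebra.
From mathcomp Require Import all_classical all_reals all_analysis.
From mathcomp Require Import complex.
Set Implicit Arguments. Unset Strict Implicit. Unset Printing Implicit Defensive.
Import Order.TTheory GRing.Theory Num.Theory.
Import numFieldNormedType.Exports.
Local Open Scope classical_set_scope.
Local Open Scope ring_scope.

(* Points / tangent vectors of H_n = R^(2n+1); 0-based coordinates:
   x_b at index b, y_b at index n+b, t at index 2n  (b < n). *)
Definition pt (R : realType) (n : nat) := 'rV[R]_(n.*2.+1).

Section Heis.
Variables (R : realType) (n : nat).
Local Notation V := (pt R n).

Definition crd (v : V) (i : nat) : R := v ord0 (inord i).
Definition xc (v : V) (b : nat) : R := crd v b.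
Definition yc (v : V) (b : nat) : R := crd v (n + b).
Definition tc (v : V) : R := crd v n.*2.

Definition Tvec : V := \row_(i < n.*2.+1) (if val i == n.*2 then 1 else 0).

(* the frame e°_1..e°_{2n} at the point p (0-based index i < 2n):
   e°_b = d/dx_b + y_b d/dt,  e°_{n+b} = d/dy_b - x_b d/dt *)
Definition ecirc (p : V) (i : nat) : V :=
  if (i < n)%N then
    \row_(k < n.*2.+1) (if val k == i then 1 else if val k == n.*2 then yc p i else 0)
  else
    \row_(k < n.*2.+1) (if val k == i then 1 else if val k == n.*2 then - xc p (i - n) else 0).

Definition Theta (p v : V) : R :=
  tc v + \sum_(b < n) (xc p b * yc v b - yc p b * xc v b).

(* its exterior derivative dTheta = 2 sum_b dx_b /\ dy_b
   (convention (a /\ b)(X,Y) = a(X) b(Y) - a(Y) b(X)) *)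
Definition dTheta (X Y : V) : R :=
  2 * \sum_(b < n) (xc X b * yc Y b - yc X b * xc Y b).

(* J on xi_p : J e°_b = e°_{n+b}, J e°_{n+b} = - e°_b (meaningful for X in xi_p) *)
Definition Jop (p X : V) : V :=
  \sum_(b < n) (xc X b *: ecirc p (n + b) - yc X b *: ecirc p b).

Definition levi (p X Y : V) : R := dTheta X (Jop p Y).

(* adapted metric: e°_1..e°_{2n}, T orthonormal *)
Definition adapted (p v w : V) : R :=
  \sum_(b < n) (xc v b * xc w b + yc v b * yc w b) + Theta p v * Theta p w.

(* the contact distribution xi_p = ker Theta_p, spanned by the e°_i *)
Definition xi (p : V) : {vspace V} := <<[seq ecirc p i | i <- iota 0 n.*2]>>%VS.

(* Hermitian extension of the Levi metric to xi (x) C; a complex vector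
   X1 + i X2 is represented by the pair (X1, X2). *)
Definition leviC (p : V) (X Y : V * V) : R[i] :=
  ((levi p X.1 Y.1 + levi p X.2 Y.2)%:C + 'i * (levi p X.2 Y.1 - levi p X.1 Y.2)%:C)%C.

End Heis.

Definition is_chart (R : realType) (N k : nat) (M : set 'rV[R]_N) (p : 'rV[R]_N)
  (phi : 'rV[R]_k -> 'rV[R]_N) (u : 'rV[R]_k) (O : set 'rV[R]_k) : Prop :=
  [/\ open O, O u, phi u = p,
      (forall x, O x -> differentiable phi x /\ injective ('d phi x)) &
      [/\ (forall x y, O x -> O y -> phi x = phi y -> x = y),
      (exists W : set 'rV[R]_N, open W /\ phi @` O = M `&` W) &
      (forall x, O x -> forall eps : R, 0 < eps -> exists2 d : R, 0 < d &
          forall y, O y -> `|phi y - phi x| < d -> `|y - x| < eps)]].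

Definition tspace (R : realType) (N k : nat) (phi : 'rV[R]_k -> 'rV[R]_N) (u : 'rV[R]_k)
  : {vspace 'rV[R]_N} :=
  <<[seq ('d phi u) (delta_mx ord0 i) | i <- enum 'I_k]>>%VS.

Section Sub.
Variables (R : realType) (n m : nat).
Local Notation V := (pt R n).

Definition hxi (Tp : {vspace V}) (p : V) : {vspace V} := (Tp :&: xi p)%VS.

Definition pseudoherm_sub (M : set V) (Tsp : V -> {vspace V}) : Prop :=
  forall p, M p ->
    \dim (hxi (Tsp p) p) = m.*2 /\
    (forall v, v \in hxi (Tsp p) p -> Jop p v \in hxi (Tsp p) p).

Definition fundamental_field (M : set V) (Tsp : V -> {vspace V}) (nu : V -> V) : Prop :=
  forall p, M p ->
    [/\ nu p \in xi p,
        (forall w, w \in hxi (Tsp p) p -> levi p (nu p) w = 0) &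
        @Tvec R n + nu p \in Tsp p].

(* Darboux frame over U (0-based indices: e_i, i < 2n; j < m; m <= a < n) *)
Definition darboux_frame (U : set V) (Tsp : V -> {vspace V}) (e : V -> nat -> V) : Prop :=
  forall p, U p ->
    [/\ (forall i k, (i < n.*2)%N -> (k < n.*2)%N ->
           adapted p (e p i) (e p k) = (i == k)%:R),
        (forall i, (i < n.*2)%N -> e p i \in xi p),
        (forall b, (b < n)%N -> e p (n + b)%N = Jop p (e p b)),
        (forall j, (j < m)%N -> e p j \in hxi (Tsp p) p) &
        (forall a, (m <= a < n)%N -> forall w, w \in hxi (Tsp p) p ->
           levi p (e p a) w = 0)].

Definition dual_forms (U : set V) (e : V -> nat -> V) (om : V -> nat -> V -> R) : Prop :=
  forall p, U p ->
    (forall i, (i < n.*2)%N -> forall (c : R) (v w : V),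
        om p i (c *: v + w) = c * om p i v + om p i w) /\
    (forall i, (i < n.*2)%N ->
       (forall k, (k < n.*2)%N -> om p i (e p k) = (i == k)%:R) /\
       om p i (@Tvec R n) = 0).

Definition ehat (e : nat -> V) (k : nat) : V :=
  if (k < m)%N then e k else e (n + (k - m))%N.

Definition dual_coframe (U : set V) (Tsp : V -> {vspace V}) (e : V -> nat -> V)
  (nu : V -> V) (homh : V -> nat -> V -> R) (thh : V -> V -> R) : Prop :=
  forall p, U p ->
    [/\ (forall i, (i < m.*2)%N -> forall (c : R) (v w : V), v \in Tsp p -> w \in Tsp p ->
           homh p i (c *: v + w) = c * homh p i v + homh p i w),
        (forall (c : R) (v w : V), v \in Tsp p -> w \in Tsp p ->
           thh p (c *: v + w) = c * thh p v + thh p w),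
        (forall i k, (i < m.*2)%N -> (k < m.*2)%N -> homh p i (ehat (e p) k) = (i == k)%:R),
        (forall i, (i < m.*2)%N -> homh p i (@Tvec R n + nu p) = 0) &
        ((forall k, (k < m.*2)%N -> thh p (ehat (e p) k) = 0) /\ thh p (@Tvec R n + nu p) = 1)].

Definition thetaC (om : nat -> V -> R) (b : nat) (v : V) : R[i] :=
  ((om b v)%:C + 'i * (om (n + b)%N v)%:C)%C.
Definition thetahC (homh : nat -> V -> R) (j : nat) (v : V) : R[i] :=
  ((homh j v)%:C + 'i * (homh (m + j)%N v)%:C)%C.
Definition Za (e : nat -> V) (a : nat) : V * V :=
  ((2 : R)^-1 *: e a, - ((2 : R)^-1 *: e (n + a)%N)).

End Sub.

From HB Require Import structures.
From mathcomp Require Import all_boot all_order all_algebra.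
From mathcomp Require Import all_classical all_reals all_analysis.
From mathcomp Require Import complex ring lra zify.
Set Implicit Arguments. Unset Strict Implicit. Unset Printing Implicit Defensive.
Import Order.TTheory GRing.Theory Num.Theory.
Import numFieldNormedType.Exports.
Local Open Scope classical_set_scope.
Local Open Scope ring_scope.

(* At a point p of U the statement is linear algebra.  The vectors hat e_k and
   T + nu form a basis of T_pM with dual basis hat omega^k, hat theta, so a tangent
   vector is v = sum_k hat omega^k(v) hat e_k + hat theta(v) (T + nu).  The form
   omega^r kills T and is dual to the Darboux frame, hence
   omega^r(v) = [hat omega part] + hat theta(v) omega^r(nu).  On xi the form Theta
   vanishes, so the Darboux frame is orthonormal for the horizontal Euclidean
   product, which is half the Levi metric; expanding nu in that frame gives
   omega^r(nu) = <nu, e_r>/2.  This vanishes for r = j and r = n + j because e_j and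
   e_{n+j} = J e_j lie in hat xi, to which nu is Levi-orthogonal. *)

Section LinearOn.
Variables (K : fieldType) (vT : vectType K).

Definition linear_on (S : {vspace vT}) (g : vT -> K) : Prop :=
  forall c v w, v \in S -> w \in S -> g (c *: v + w) = c * g v + g w.

Lemma linear_on0 (S : {vspace vT}) (g : vT -> K) : linear_on S g -> g 0 = 0.
Proof.
move=> gS; have := gS 1 0 0 (mem0v _) (mem0v _).
by rewrite scale1r addr0 mul1r => /(congr1 (fun x => x - g 0)); rewrite subrr addrK.
Qed.

Lemma linear_on_sum (S : {vspace vT}) (g : vT -> K) (I : Type) (r : seq I)
    (c : I -> K) (w : I -> vT) :
  linear_on S g -> (forall x, w x \in S) ->
  g (\sum_(x <- r) c x *: w x) = \sum_(x <- r) c x * g (w x).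
Proof.
move=> gS wS; elim: r => [|x r IHr]; first by rewrite !big_nil (linear_on0 gS).
rewrite !big_cons gS ?IHr //; apply: rpred_sum => y _; exact: rpredZ.
Qed.

Lemma linear_span_eq0 (g : vT -> K) (xs : seq vT) :
  linear_on fullv g -> {in xs, forall x, g x = 0} -> forall v, v \in <<xs>>%VS -> g v = 0.
Proof.
move=> gL g0 v vxs.
have /coord_span -> : v \in <<in_tuple xs>>%VS by [].
rewrite (linear_on_sum _ _ gL) => [|i]; last exact: memvf.
by rewrite big1 // => i _; rewrite g0 ?mulr0 // mem_nth.
Qed.

Section DualFamily.
Variables (S : {vspace vT}) (N : nat) (W : nat -> vT) (f : nat -> vT -> K).
Hypotheses (dimS : (\dim S <= N)%N) (fS : forall i, (i < N)%N -> linear_on S (f i))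
  (WS : forall k, (k < N)%N -> W k \in S)
  (fW : forall i k, (i < N)%N -> (k < N)%N -> f i (W k) = (i == k)%:R).

Let X := [tuple W i | i < N].

Let XE (i : 'I_N) : X`_i = W i. Proof. exact: nth_mktuple. Qed.

Let f_comb (c : 'I_N -> K) (i : 'I_N) : f i (\sum_(j < N) c j *: X`_j) = c i.
Proof.
rewrite (linear_on_sum _ _ (fS (ltn_ord i))) => [|j]; last by rewrite XE WS.
rewrite (bigD1 i) //= XE fW // eqxx mulr1 big1 ?addr0 // => j ji.
by rewrite XE fW // eq_sym; move: ji; rewrite -val_eqE => /negbTE ->; rewrite mulr0.
Qed.

Let span_X : <<X>>%VS = S.
Proof.
have freeX : free X.
  apply/freeP => c c0 i; rewrite -(f_comb c i) c0; exact: linear_on0 (fS _).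
have sXS : (<<X>> <= S)%VS by apply/span_subvP => _ /mapP [i _ ->]; exact: WS.
apply/eqP; rewrite -(geq_leqif (dimv_leqif_eq sXS)).
by move/eqP: freeX => ->; rewrite size_tuple.
Qed.

Lemma dual_family_decomp v : v \in S -> v = \sum_(i < N) f i v *: W i.
Proof.
rewrite -span_X => /coord_span vE; rewrite {1}vE; apply: eq_bigr => i _.
by rewrite XE [in RHS]vE f_comb.
Qed.

Lemma linear_on_dual_expand (g : vT -> K) v :
  linear_on S g -> v \in S -> g v = \sum_(i < N) f i v * g (W i).
Proof.
move=> gS vS; rewrite {1}(dual_family_decomp vS) (linear_on_sum _ _ gS) // => i.
exact: WS.
Qed.
End DualFamily.
End LinearOn.

Lemma sum_ord_mul_eq (R : ringType) N (F : nat -> R) b :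
  \sum_(i < N) F i * (i == b :> nat)%:R = if (b < N)%N then F b else 0.
Proof.
rewrite -(big_ord1_eq (@GRing.add R)) [RHS]big_mkcond; apply: eq_bigr => i _.
by case: eqP; rewrite ?mulr1 ?mulr0.
Qed.

Section HeisenbergFrame.
Variables (R : realType) (n : nat).
Local Notation V := (pt R n).

Lemma crdD c (X Y : V) k : crd (c *: X + Y) k = c * crd X k + crd Y k.
Proof. by rewrite /crd !mxE. Qed.

Lemma crdB c d (X Y : V) k : crd (c *: X - d *: Y) k = c * crd X k - d * crd Y k.
Proof. by rewrite /crd !mxE. Qed.

Lemma crd_sum I (r : seq I) (F : I -> V) k :
  crd (\sum_(x <- r) F x) k = \sum_(x <- r) crd (F x) k.
Proof. by rewrite /crd summxE. Qed.

Lemma crd_ecirc (p : V) i k : (i < n.*2)%N -> (k < n.*2)%N ->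
  crd (ecirc p i) k = (k == i)%:R.
Proof.
move=> ilt klt; have k2n : (k == n.*2) = false by lia.
have kle : (k < n.*2.+1)%N by lia.
by rewrite /crd /ecirc; case: ifP => _; rewrite mxE /= inordK // k2n; case: (k == i).
Qed.

Lemma tc_ecirc (p : V) i : (i < n.*2)%N ->
  tc (ecirc p i) = if (i < n)%N then yc p i else - xc p (i - n).
Proof.
move=> ilt; have i2n : (n.*2 == i) = false by lia.
by rewrite /tc /crd /ecirc; case: ifP => _; rewrite mxE /= inordK // i2n eqxx.
Qed.

Lemma xc_Jop (p Y : V) b : (b < n)%N -> xc (Jop p Y) b = - yc Y b.
Proof.
move=> blt; rewrite /xc /Jop crd_sum.
rewrite (eq_bigr (fun c : 'I_n => - (yc Y c * (c == b :> nat)%:R))) => [|c _].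
  by rewrite sumrN sum_ord_mul_eq blt.
have clt := ltn_ord c; rewrite crdB !crd_ecirc; try lia.
have -> : (b == (n + c)%N) = false by lia.
by rewrite [b == c :> nat]eq_sym mulr0 add0r.
Qed.

Lemma yc_Jop (p Y : V) b : (b < n)%N -> yc (Jop p Y) b = xc Y b.
Proof.
move=> blt; rewrite /yc /Jop crd_sum.
rewrite (eq_bigr (fun c : 'I_n => xc Y c * (c == b :> nat)%:R)) => [|c _].
  by rewrite sum_ord_mul_eq blt.
have clt := ltn_ord c; rewrite crdB !crd_ecirc; try lia.
have -> : ((n + b)%N == c) = false by lia.
by rewrite eqn_add2l [b == c :> nat]eq_sym mulr0 oppr0 addr0.
Qed.

Lemma Theta_ecirc (p : V) i : (i < n.*2)%N -> Theta p (ecirc p i) = 0.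
Proof.
move=> ilt; rewrite /Theta tc_ecirc //; case: ltnP => [iltn | ngei].
  rewrite (eq_bigr (fun b : 'I_n => - (yc p b * (b == i :> nat)%:R))) => [|b _].
    by rewrite sumrN sum_ord_mul_eq iltn addrN.
  have blt := ltn_ord b; rewrite /xc /yc !crd_ecirc; try lia.
  have -> : ((n + b)%N == i) = false by lia.
  by rewrite mulr0 add0r.
rewrite (eq_bigr (fun b : 'I_n => xc p b * (b == (i - n)%N :> nat)%:R)) => [|b _].
  by rewrite sum_ord_mul_eq ifT ?addNr //; lia.
have blt := ltn_ord b; rewrite /xc /yc !crd_ecirc; try lia.
have -> : ((n + b)%N == i) = (b == (i - n)%N :> nat) by lia.
have -> : (b == i :> nat) = false by lia.
by rewrite mulr0 subr0.
Qed.

Lemma Theta_linear_on (p : V) : linear_on fullv (Theta p).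
Proof.
move=> c v w _ _; rewrite /Theta /tc crdD mulrDr addrACA; congr (_ + _).
rewrite mulr_sumr -big_split /=; apply: eq_bigr => b _; rewrite /xc /yc !crdD; ring.
Qed.

Lemma Theta_xi (p v : V) : v \in xi p -> Theta p v = 0.
Proof.
apply: linear_span_eq0; first exact: Theta_linear_on.
move=> x; case/mapP => i; rewrite mem_iota add0n => /andP [_ ilt] ->; exact: Theta_ecirc.
Qed.

Lemma dim_xi (p : V) : (\dim (xi p) <= n.*2)%N.
Proof. by apply: leq_trans (dim_span _) _; rewrite size_map size_iota. Qed.

Definition hdot (X Y : V) : R := \sum_(b < n) (xc X b * xc Y b + yc X b * yc Y b).

Lemma levi_hdot (p X Y : V) : levi p X Y = 2 * hdot X Y.
Proof.
rewrite /levi /dTheta /hdot; congr (_ * _); apply: eq_bigr => b _.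
by rewrite xc_Jop ?yc_Jop //; ring.
Qed.

Lemma hdot_linear_on (S : {vspace V}) (Y : V) : linear_on S (hdot^~ Y).
Proof.
move=> c v w _ _; rewrite /hdot mulr_sumr -big_split /=; apply: eq_bigr => b _.
rewrite /xc /yc !crdD; ring.
Qed.

Lemma hdot0l (Y : V) : hdot 0 Y = 0.
Proof. by rewrite /hdot big1 // => b _; rewrite /xc /yc /crd !mxE !mul0r addr0. Qed.

Lemma hdotZr (X : V) c (Y : V) : hdot X (c *: Y) = c * hdot X Y.
Proof. by rewrite /hdot mulr_sumr; apply: eq_bigr => b _; rewrite /xc /yc /crd !mxE; ring. Qed.

Lemma hdotNr (X Y : V) : hdot X (- Y) = - hdot X Y.
Proof. by rewrite -scaleN1r hdotZr mulN1r. Qed.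

Lemma thetaC_real_scale (om : nat -> V -> R) b v (x y z : R) :
  om b v = x * z -> om (n + b)%N v = y * z ->
  thetaC om b v = ((x%:C + 'i * y%:C) * z%:C)%C.
Proof. by move=> omb omnb; rewrite /thetaC omb omnb mulrDl -mulrA !rmorphM. Qed.

Lemma leviC_Za (p X : V) (f : nat -> V) a :
  leviC p (X, 0) (Za f a) =
  ((2^-1 * levi p X (f a))%:C + 'i * (2^-1 * levi p X (f (n + a)%N))%:C)%C.
Proof.
rewrite /leviC /Za /= !levi_hdot hdotNr !hdotZr hdotNr !hdotZr !hdot0l.
by congr (_%:C + 'i * _%:C)%C; ring.
Qed.
End HeisenbergFrame.

Lemma dim_tspace (R : realType) (N k : nat) (phi : 'rV[R]_k -> 'rV[R]_N) (u : 'rV[R]_k) :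
  (\dim (tspace phi u) <= k)%N.
Proof. by apply: leq_trans (dim_span _) _; rewrite size_map size_enum_ord. Qed.

Section DarbouxFrameAtPoint.
Variables (R : realType) (n m : nat).
Local Notation V := (pt R n).
Variables (M U : set V) (Tsp : V -> {vspace V}) (nu : V -> V) (e : V -> nat -> V).
Variables (om homh : V -> nat -> V -> R) (thh : V -> V -> R) (p : V).
Hypotheses (hmn : (m <= n)%N) (HUM : U `<=` M) (Up : U p).
Hypotheses (Hpsh : pseudoherm_sub m M Tsp) (Hnu : fundamental_field M Tsp nu).
Hypotheses (He : darboux_frame m U Tsp e) (Hom : dual_forms U e om).
Hypothesis (Hhat : dual_coframe m U Tsp e nu homh thh).

Lemma frame_hxi j : (j < m)%N ->
  e p j \in hxi (Tsp p) p /\ e p (n + j)%N \in hxi (Tsp p) p.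
Proof.
move=> jlt; have [_ _ eJ ehxi _] := He Up; have [_ Jhxi] := Hpsh (HUM Up).
have ej_hxi := ehxi j jlt; split => //.
by rewrite eJ; [exact: Jhxi | lia].
Qed.

Lemma frame_hdot i k : (i < n.*2)%N -> (k < n.*2)%N -> hdot (e p i) (e p k) = (i == k)%:R.
Proof.
move=> ilt klt; have [eON exi _ _ _] := He Up.
by rewrite -(eON i k) // /adapted !Theta_xi ?exi // mul0r addr0.
Qed.

Lemma hdot_nu_hxi w : w \in hxi (Tsp p) p -> hdot (nu p) w = 0.
Proof.
move=> whxi; have [_ nu_perp _] := Hnu (HUM Up).
by have := nu_perp w whxi; rewrite levi_hdot; lra.
Qed.

Lemma om_frame r k : (r < n.*2)%N -> (k < n.*2)%N -> om p r (e p k) = (r == k)%:R.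
Proof. by move=> rlt; exact: ((Hom Up).2 r rlt).1. Qed.

Lemma om_ehat r k : (r < n.*2)%N -> (k < m.*2)%N ->
  om p r (ehat m (e p) k) = (r == if (k < m)%N then k else (n + (k - m))%N)%:R.
Proof. by move=> rlt klt; rewrite /ehat; case: ifP => kltm; rewrite om_frame //; lia. Qed.

Lemma om_nu r : (r < n.*2)%N -> om p r (nu p) = hdot (nu p) (e p r).
Proof.
move=> rlt; have [nuxi _ _] := Hnu (HUM Up); have [_ exi _ _ _] := He Up.
have omL := (Hom Up).1.
have omS i : (i < n.*2)%N -> linear_on (xi p) (om p i).
  by move=> ilt c v w _ _; exact: omL.
rewrite (linear_on_dual_expand (dim_xi p) omS exi om_frame (hdot_linear_on (e p r)) nuxi).
rewrite (eq_bigr (fun i : 'I_n.*2 => om p i (nu p) * (i == r :> nat)%:R)) => [|i _].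
  by rewrite (sum_ord_mul_eq _ (fun i => om p i (nu p))) rlt.
by rewrite frame_hdot.
Qed.

Hypothesis dimT : (\dim (Tsp p) <= m.*2.+1)%N.

(* [ehat m (e p) k] is [e p (if k < m then k else n + (k - m))], so the index
   hypothesis says [e p r = ehat m (e p) b]; [b = m.*2] encodes that [e p r] lies
   in the complement of hat xi. *)
Lemma om_tangent_delta r b v : (r < n.*2)%N -> v \in Tsp p ->
  (forall k, (k < m.*2)%N -> (r == if (k < m)%N then k else (n + (k - m))%N) = (k == b)) ->
  om p r v = (if (b < m.*2)%N then homh p b v else 0) + thh p v * hdot (nu p) (e p r).
Proof.
move=> rlt vT ehat_b; have [homhS thhS homh_ehat homh_T [thh_ehat thh_T]] := Hhat Up.
have [_ _ T_nu] := Hnu (HUM Up).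
have omL := (Hom Up).1 r rlt; have [_ omT] := (Hom Up).2 r rlt.
have ehatT k : (k < m.*2)%N -> ehat m (e p) k \in Tsp p.
  move=> klt; apply: (subvP (capvSl _ (xi p))); rewrite /ehat; case: ifP => kltm.
    exact: (frame_hxi kltm).1.
  by apply: (frame_hxi _).2; lia.
pose W k := if (k < m.*2)%N then ehat m (e p) k else Tvec R n + nu p.
pose f i := if (i < m.*2)%N then homh p i else thh p.
have fS i : (i < m.*2.+1)%N -> linear_on (Tsp p) (f i).
  by rewrite /f; case: ifP => [ilt _ | _ _]; [exact: homhS | exact: thhS].
have WS k : (k < m.*2.+1)%N -> W k \in Tsp p.
  by rewrite /W; case: ifP => [klt _ | _ _]; [exact: ehatT | exact: T_nu].
have fW i k : (i < m.*2.+1)%N -> (k < m.*2.+1)%N -> f i (W k) = (i == k)%:R.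
  rewrite /f /W; case: ifP => ilt; case: ifP => klt ile kle.
  - exact: homh_ehat.
  - by rewrite homh_T //; have -> : (i == k) = false by lia.
  - by rewrite thh_ehat //; have -> : (i == k) = false by lia.
  - by rewrite thh_T; have -> : (i == k) by lia.
have omS : linear_on (Tsp p) (om p r) by move=> c x y _ _; exact: omL.
rewrite (linear_on_dual_expand dimT fS WS fW omS vT) big_ord_recr /= /f /W ltnn.
have om_Tnu : om p r (Tvec R n + nu p) = hdot (nu p) (e p r).
  by rewrite -[Tvec R n]scale1r omL omT mul1r add0r om_nu.
rewrite om_Tnu -(sum_ord_mul_eq _ (fun i => homh p i v)); congr (_ + _).
by apply: eq_bigr => i _; rewrite ltn_ord om_ehat // ehat_b.
Qed.

Lemma om_tangent_hat j v : (j < m)%N -> v \in Tsp p ->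
  om p j v = homh p j v /\ om p (n + j)%N v = homh p (m + j)%N v.
Proof.
move=> jlt vT; have [ej_hxi enj_hxi] := frame_hxi jlt.
split; [rewrite (@om_tangent_delta j j v) | rewrite (@om_tangent_delta (n + j) (m + j)%N v)];
  rewrite ?hdot_nu_hxi ?mulr0 ?addr0 ?ifT //; try lia;
  by move=> k klt; case: ifP => kltm; lia.
Qed.

Lemma om_tangent_normal a v : (m <= a < n)%N -> v \in Tsp p ->
  om p a v = 2^-1 * levi p (nu p) (e p a) * thh p v /\
  om p (n + a)%N v = 2^-1 * levi p (nu p) (e p (n + a)%N) * thh p v.
Proof.
move=> alt vT.
have normal r : (r < n.*2)%N ->
    (forall k, (k < m.*2)%N -> (r == if (k < m)%N then k else (n + (k - m))%N) = (k == m.*2)) ->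
    om p r v = 2^-1 * levi p (nu p) (e p r) * thh p v.
  by move=> rlt idx_r; rewrite (@om_tangent_delta r m.*2 v) // ltnn add0r levi_hdot; field.
by split; apply: normal; try lia; move=> k klt; case: ifP => kltm; lia.
Qed.
End DarbouxFrameAtPoint.

Theorem proposition3p2 (R : realType) (n m : nat) (hmn : (m <= n)%N)
  (M : set (pt R n))
  (phi : pt R n -> 'rV[R]_(m.*2.+1) -> pt R n) (u : pt R n -> 'rV[R]_(m.*2.+1))
  (O : pt R n -> set 'rV[R]_(m.*2.+1))
  (Hchart : forall p, M p -> is_chart M p (phi p) (u p) (O p))
  (Hpsh : pseudoherm_sub m M (fun p => tspace (phi p) (u p)))
  (nu : pt R n -> pt R n)
  (Hnu : fundamental_field M (fun p => tspace (phi p) (u p)) nu)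
  (U : set (pt R n)) (HUM : U `<=` M)
  (HUo : exists W : set (pt R n), open W /\ U = M `&` W)
  (e : pt R n -> nat -> pt R n)
  (He : darboux_frame m U (fun p => tspace (phi p) (u p)) e)
  (om : pt R n -> nat -> pt R n -> R) (Hom : dual_forms U e om)
  (homh : pt R n -> nat -> pt R n -> R) (thh : pt R n -> pt R n -> R)
  (Hhat : dual_coframe m U (fun p => tspace (phi p) (u p)) e nu homh thh) :
  forall p, U p -> forall v, v \in tspace (phi p) (u p) ->
    [/\ (forall j, (j < m)%N ->
           om p j v = homh p j v /\ om p (n + j)%N v = homh p (m + j)%N v),
        (forall a, (m <= a < n)%N ->
           om p a v = 2^-1 * levi p (nu p) (e p a) * thh p v /\
           om p (n + a)%N v = 2^-1 * levi p (nu p) (e p (n + a)%N) * thh p v),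
        (forall j, (j < m)%N -> thetaC (om p) j v = thetahC m (homh p) j v),
        (forall a, (m <= a < n)%N ->
           thetaC (om p) a v = leviC p (nu p, 0) (Za (e p) a) * (thh p v)%:C%C) &
        (nu p = 0 -> forall a, (m <= a < n)%N -> thetaC (om p) a v = 0)].
Proof.
move=> p Up v vT; have dimT := dim_tspace (phi p) (u p).
have hat j (jlt : (j < m)%N) := om_tangent_hat hmn HUM Up Hpsh Hnu He Hom Hhat dimT jlt vT.
have normal a (alt : (m <= a < n)%N) :=
  om_tangent_normal hmn HUM Up Hpsh Hnu He Hom Hhat dimT alt vT.
have thetaC_normal a : (m <= a < n)%N ->
    thetaC (om p) a v = leviC p (nu p, 0) (Za (e p) a) * (thh p v)%:C%C.
  by move=> alt; have [oma omna] := normal a alt; rewrite leviC_Za (thetaC_real_scale oma omna).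
split => // [j jlt | nu0 a alt].
  by have [omj omnj] := hat j jlt; rewrite /thetaC /thetahC omj omnj.
by rewrite thetaC_normal // nu0 leviC_Za !levi_hdot !hdot0l !mulr0 rmorph0 addr0 mul0r.
Qed.
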